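(* In the finite-sum strongly monotone setting below, for any $0<\alpha\le\mu/(5nl^2)$ and $K\ge1$, the GDA iterates satisfy $$\max_{\tau_1,\dots,\tau_K\in\mathbb{S}_n}\|\mathbf{z}^{K+1}_0-\mathbf{z}^*\|^2\le 2e^{-n\alpha\mu K}\|\mathbf{z}_0-\mathbf{z}^*\|^2+\frac{3l^2\sigma_*^2\alpha^3n^3K}{\mu}.$$ Moreover, if $\|\nu(\mathbf{z}_0)\|K/\mu>1$ and $\alpha=\min\{\mu/(5nl^2),\,2\log(\|\nu(\mathbf{z}_0)\|K/\mu)/(\mu nK)\}$, then $$\max_{\tau_1,\dots,\tau_K\in\mathbb{S}_n}\|\mathbf{z}^{K+1}_0-\mathbf{z}^*\|^2\le 2e^{-K/(5\kappa^2)}\|\mathbf{z}_0-\mathbf{z}^*\|^2+\frac{2\mu^2+24\kappa^2\sigma_*^2\log^3(\|\nu(\mathbf{z}_0)\|K/\mu)}{\mu^2K^2}.$$ In particular this applies to the incremental gradient method ($\tau_k=\mathrm{id}$ for all $k$).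
   Context: Setting: $n\ge1$; $\omega_1,\dots,\omega_n:\mathbb{R}^d\to\mathbb{R}^d$ are each $l$-Lipschitz (not necessarily monotone), and $\nu=\frac1n\sum_{i=1}^n\omega_i$ is $\mu$-strongly monotone ($\langle\nu(\mathbf{z}_1)-\nu(\mathbf{z}_2),\mathbf{z}_1-\mathbf{z}_2\rangle\ge\mu\|\mathbf{z}_1-\mathbf{z}_2\|^2$), with unique root $\mathbf{z}^*$. $\kappa=l/\mu$ and $\sigma_*^2=\frac1n\sum_{i=1}^n\|\omega_i(\mathbf{z}^* )\|^2$. $\mathbb{S}_n$ is the set of permutations of $[n]$. GDA with permutations $\tau_1,\dots,\tau_K$: $\mathbf{z}^1_0=\mathbf{z}_0$; in epoch $k$, $\mathbf{z}^k_i=\mathbf{z}^k_{i-1}-\alpha\,\omega_{\tau_k(i)}(\mathbf{z}^k_{i-1})$ for $i=1,\dots,n$, and $\mathbf{z}^{k+1}_0=\mathbf{z}^k_n$. The maximum is over all sequences of permutations (adversarial shuffling). *)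

From HB Require Import structures.
From mathcomp Require Import all_boot all_order all_algebra.
From mathcomp Require Import fingroup perm.
From mathcomp Require Import all_classical all_reals all_analysis.
Set Implicit Arguments. Unset Strict Implicit. Unset Printing Implicit Defensive.
Import Order.TTheory GRing.Theory Num.Theory.
Local Open Scope ring_scope.

Section GDA.
Variable R : realType.
Variable d : nat.

Definition gda_dot (u v : 'rV[R]_d) : R := \sum_(j < d) u 0 j * v 0 j.
Definition gda_sqnorm (u : 'rV[R]_d) : R := gda_dot u u.
Definition gda_norm (u : 'rV[R]_d) : R := Num.sqrt (gda_sqnorm u).

Definition gda_lipschitz (l : R) (f : 'rV[R]_d -> 'rV[R]_d) : Prop :=
  forall x y, gda_norm (f x - f y) <= l * gda_norm (x - y).

Definition gda_strongly_monotone (mu : R) (f : 'rV[R]_d -> 'rV[R]_d) : Prop :=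
  forall x y, gda_dot (f x - f y) (x - y) >= mu * gda_sqnorm (x - y).

Variable n : nat.
Variable omega : 'I_n -> 'rV[R]_d -> 'rV[R]_d.

Definition gda_nu (z : 'rV[R]_d) : 'rV[R]_d := (n%:R)^-1 *: \sum_(i < n) omega i z.

Definition gda_sigma2 (zs : 'rV[R]_d) : R := (n%:R)^-1 * \sum_(i < n) gda_sqnorm (omega i zs).

(* One gda_epoch: z_i = z_{i-1} - alpha * omega_{tau(i)}(z_{i-1}), i = 1..n
   (indices 0..n-1 here, in increasing order). *)
Definition gda_epoch (alpha : R) (tau : 'S_n) (z : 'rV[R]_d) : 'rV[R]_d :=
  foldl (fun w (i : 'I_n) => w - alpha *: omega (tau i) w) z (enum 'I_n).

(* gda alpha taus k z0 = z^{k+1}_0, using permutations taus 0, ..., taus (k-1)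
   (taus (k-1) plays the role of tau_k). *)
Fixpoint gda (alpha : R) (taus : nat -> 'S_n) (k : nat) (z0 : 'rV[R]_d) : 'rV[R]_d :=
  match k with
  | 0 => z0
  | k'.+1 => gda_epoch alpha (taus k') (gda alpha taus k' z0)
  end.

End GDA.

From HB Require Import structures.
From mathcomp Require Import all_boot all_order all_algebra.
From mathcomp Require Import fingroup perm.
From mathcomp Require Import all_classical all_reals all_analysis.
From mathcomp Require Import ring lra.
Import Order.TTheory GRing.Theory Num.Theory.
Local Open Scope ring_scope.

(* One epoch of shuffled GDA with step [alpha] is a single step of size
   [n alpha] on [nu], which contracts |z - z*|^2 by 1 - 2 n alpha mu + (n alpha l)^2,
   perturbed by the drift of the inner iterates away from the start of the epoch.
   As every omega_i is l-Lipschitz, the drift costs at most (n alpha l)^2 times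
   sigma*^2 and |z - z*|^2, whatever the permutation, so for alpha <= mu/(5 n l^2)
     |z_{k+1} - z*|^2 <= (1 - n alpha mu) |z_k - z*|^2 + 3 l^2 sigma*^2 alpha^3 n^3 / mu.
   Unrolling this and 1 - x <= e^{-x} give the first bound.  For the tuned step
   size, either alpha = mu/(5 n l^2), which gives the rate e^{-K/(5 kappa^2)}, or
   e^{-n alpha mu K} = (mu / (|nu(z0)| K))^2, and mu |z0 - z*| <= |nu(z0)| bounds
   the bias by 1/K^2. *)

Lemma sum_ord_natr_le (R : realDomainType) m : 2 * \sum_(i < m) (i%:R : R) <= m%:R ^+ 2.
Proof.
elim: m => [|m IH]; first by rewrite big_ord0 mulr0 expr0n.
by rewrite big_ord_recr /= mulrDr -natr1; lra.
Qed.

Lemma step_size_contraction_le {R : realFieldType} (p mu L : R) :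
  0 < mu -> 0 <= p -> mu ^+ 2 <= L -> 5 * p * L <= mu -> p * mu <= 1 / 5.
Proof.
move=> mu0 p0 muL pL; rewrite -(ler_pM2r mu0).
by have := ler_wpM2l p0 muL; lra.
Qed.

(* [x = n alpha mu] and [b = (n alpha l)^2]; [U], [Y] and [T] are the squared
   errors of the full step, of the drift and of the whole epoch. *)
Lemma epoch_contraction_arith {R : realFieldType} (x b W N T U Y : R) :
  0 < x -> x <= 1 / 5 -> 0 <= b -> 5 * b <= x -> 0 <= W -> 0 <= N ->
  U <= (1 - 2 * x + b) * W -> (1 - 2 * b) * Y <= x * N + 2 * b ^+ 2 * W ->
  T <= (1 + x / 2) * U + (1 + (x / 2)^-1) * Y ->
  T <= (1 - x) * W + 3 * N.
Proof.
move=> x0 x15 b0 bx W0 N0 hU hY hT.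
have b1 : 0 < 1 - 2 * b by lra.
have hxT : x * T <= x * (1 + x / 2) * ((1 - 9 / 5 * x) * W) + (x + 2) * Y.
  have bW : b * W <= x / 5 * W by apply: ler_wpM2r => //; lra.
  have hU' : U <= (1 - 9 / 5 * x) * W by lra.
  have c0 : 0 <= x * (1 + x / 2) by rewrite mulr_ge0 ?ltW //; lra.
  have := ler_wpM2l c0 hU'.
  have := ler_wpM2l (ltW x0) hT; rewrite mulrDr invf_div.
  have -> : x * ((1 + 2 / x) * Y) = (x + 2) * Y by field; rewrite gt_eqF.
  rewrite mulrA; lra.
have hnoise : (x + 2) * (x * N) <= 3 * (1 - 2 * b) * (x * N).
  by apply: ler_wpM2r; [rewrite mulr_ge0 // ltW | lra].
have hdrift : 2 * b ^+ 2 * (x + 2) * W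
              <= x * (1 - 2 * b) * (3 / 10 * x + 9 / 10 * x ^+ 2) * W.
  apply: ler_wpM2r => //.
  have hb2 : b ^+ 2 <= x ^+ 2 / 25 by nra.
  have : x ^+ 2 * (23 / 25) * (3 / 10 + 9 / 10 * x) <= x ^+ 2 * (1 - 2 * b) * (3 / 10 + 9 / 10 * x).
    by apply: ler_wpM2r; [lra | apply: ler_wpM2l; [exact: sqr_ge0 | lra]].
  have := sqr_ge0 x; nra.
suff : (1 - 2 * b) * (x * T) <= (1 - 2 * b) * (x * ((1 - x) * W + 3 * N)).
  by rewrite ler_pM2l // ler_pM2l.
have x2 : 0 <= x + 2 by lra.
have := ler_wpM2l (ltW b1) hxT; have := ler_wpM2l x2 hY; nra.
Qed.

Lemma affine_recurrence_le {R : realDomainType} (a : nat -> R) (c N : R) :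
  0 <= c <= 1 -> 0 <= N -> (forall k, a k.+1 <= c * a k + N) ->
  forall k, a k <= c ^+ k * a 0%N + k%:R * N.
Proof.
move=> /andP[c0 c1] N0 ha; elim=> [|k IH]; first by rewrite expr0 mul1r mul0r addr0.
apply: le_trans (ha k) _; rewrite exprS -mulrA -natr1.
have := ler_wpM2l c0 IH; have := mulr_ge0 (ler0n R k) N0; nra.
Qed.

Lemma expn_one_sub_le_expR {R : realType} (x : R) k :
  x <= 1 -> (1 - x) ^+ k <= expR (- (x * k%:R)).
Proof.
move=> x1; rewrite -mulNr expRM_natr lerXn2r ?nnegrE ?expR_ge0 ?subr_ge0 //.
by have := expR_ge1Dx (- x); lra.
Qed.

Section InnerProduct.
Context {R : realType} {d : nat}.
Implicit Types (u v w : 'rV[R]_d) (a c : R).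

Lemma gda_dotC u v : gda_dot u v = gda_dot v u.
Proof. by apply: eq_bigr => j _; rewrite mulrC. Qed.

Lemma gda_dotDl u v w : gda_dot (u + v) w = gda_dot u w + gda_dot v w.
Proof. by rewrite /gda_dot -big_split; apply: eq_bigr => j _; rewrite !mxE mulrDl. Qed.

Lemma gda_dotZl a u w : gda_dot (a *: u) w = a * gda_dot u w.
Proof. by rewrite /gda_dot mulr_sumr; apply: eq_bigr => j _; rewrite !mxE mulrA. Qed.

Lemma gda_dotNl u w : gda_dot (- u) w = - gda_dot u w.
Proof. by rewrite -scaleN1r gda_dotZl mulN1r. Qed.

Lemma gda_dotDr u v w : gda_dot w (u + v) = gda_dot w u + gda_dot w v.
Proof. by rewrite gda_dotC gda_dotDl !(gda_dotC w). Qed.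

Lemma gda_dotZr a u w : gda_dot w (a *: u) = a * gda_dot w u.
Proof. by rewrite gda_dotC gda_dotZl gda_dotC. Qed.

Lemma gda_dotNr u w : gda_dot w (- u) = - gda_dot w u.
Proof. by rewrite gda_dotC gda_dotNl gda_dotC. Qed.

Lemma gda_dot_suml m (F : 'I_m -> 'rV[R]_d) w :
  gda_dot (\sum_(i < m) F i) w = \sum_(i < m) gda_dot (F i) w.
Proof.
elim: m F => [|m IH] F; last by rewrite !big_ord_recr /= gda_dotDl IH.
by rewrite !big_ord0 /gda_dot big1 // => j _; rewrite mxE mul0r.
Qed.

Lemma gda_sqnorm_ge0 u : 0 <= gda_sqnorm u.
Proof. by rewrite /gda_sqnorm /gda_dot sumr_ge0 // => j _; rewrite -expr2 sqr_ge0. Qed.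

Lemma gda_sqnorm0 : gda_sqnorm (0 : 'rV[R]_d) = 0.
Proof. by rewrite /gda_sqnorm -(scale0r 0) gda_dotZl mul0r. Qed.

Lemma gda_sqnormD u v :
  gda_sqnorm (u + v) = gda_sqnorm u + 2 * gda_dot u v + gda_sqnorm v.
Proof. by rewrite /gda_sqnorm !gda_dotDl !gda_dotDr (gda_dotC v u); ring. Qed.

Lemma gda_sqnormN u : gda_sqnorm (- u) = gda_sqnorm u.
Proof. by rewrite /gda_sqnorm gda_dotNl gda_dotNr opprK. Qed.

Lemma gda_sqnormZ a u : gda_sqnorm (a *: u) = a ^+ 2 * gda_sqnorm u.
Proof. by rewrite /gda_sqnorm gda_dotZl gda_dotZr mulrA expr2. Qed.

Lemma gda_dot_le u v : 2 * gda_dot u v <= gda_sqnorm u + gda_sqnorm v.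
Proof. by have := gda_sqnorm_ge0 (u - v); rewrite gda_sqnormD gda_sqnormN gda_dotNr; lra. Qed.

Lemma gda_dot_le_scaled c u v : 0 < c ->
  2 * gda_dot u v <= c * gda_sqnorm u + c^-1 * gda_sqnorm v.
Proof.
move=> c0; have := gda_dot_le (c *: u) v; rewrite gda_dotZl gda_sqnormZ => H.
have -> : c * gda_sqnorm u + c^-1 * gda_sqnorm v
    = c^-1 * (c ^+ 2 * gda_sqnorm u + gda_sqnorm v) by field; rewrite gt_eqF.
have -> : 2 * gda_dot u v = c^-1 * (2 * (c * gda_dot u v)) by field; rewrite gt_eqF.
by rewrite ler_wpM2l // invr_ge0 ltW.
Qed.

Lemma gda_sqnormD_le2 u v : gda_sqnorm (u + v) <= 2 * gda_sqnorm u + 2 * gda_sqnorm v.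
Proof. by rewrite gda_sqnormD; have := gda_dot_le u v; lra. Qed.

Lemma gda_sqnormD_le_scaled c u v : 0 < c ->
  gda_sqnorm (u + v) <= (1 + c) * gda_sqnorm u + (1 + c^-1) * gda_sqnorm v.
Proof. by move=> c0; rewrite gda_sqnormD; have := gda_dot_le_scaled c u v c0; lra. Qed.

Lemma gda_sqnorm_sum_le m (F : 'I_m -> 'rV[R]_d) :
  gda_sqnorm (\sum_(i < m) F i) <= m%:R * \sum_(i < m) gda_sqnorm (F i).
Proof.
elim: m F => [|m IH] F; first by rewrite !big_ord0 mul0r gda_sqnorm0.
rewrite !big_ord_recr /= gda_sqnormD.
set S := \sum_(i < m) F _; set G := \sum_(i < m) gda_sqnorm _.
have HS : gda_sqnorm S <= m%:R * G := IH _.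
have Hcross : 2 * gda_dot S (F ord_max) <= G + m%:R * gda_sqnorm (F ord_max).
  have -> : m%:R * gda_sqnorm (F ord_max) = \sum_(i < m) gda_sqnorm (F ord_max)
    by rewrite sumr_const card_ord mulr_natl.
  rewrite /S gda_dot_suml mulr_sumr /G -big_split /=; apply: ler_sum => i _.
  exact: gda_dot_le.
by rewrite mulrSr; have := gda_sqnorm_ge0 (F ord_max); nra.
Qed.

Lemma gda_lipschitz_sqnorm l (f : 'rV[R]_d -> 'rV[R]_d) x y :
  gda_lipschitz l f -> gda_sqnorm (f x - f y) <= l ^+ 2 * gda_sqnorm (x - y).
Proof.
move=> /(_ x y); rewrite /gda_norm => H.
rewrite -(sqr_sqrtr (gda_sqnorm_ge0 (f x - f y))) -(sqr_sqrtr (gda_sqnorm_ge0 (x - y))).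
by rewrite -exprMn !expr2 ler_pM ?sqrtr_ge0.
Qed.

Lemma gda_sqnorm_dim0 u : d = 0%N -> gda_sqnorm u = 0.
Proof. by move=> d0; rewrite /gda_sqnorm /gda_dot big1 // => j; have := ltn_ord j; rewrite {2}d0. Qed.

Lemma gda_sqnorm_le_dot (mu : R) w v :
  0 < mu -> mu * gda_sqnorm v <= gda_dot w v -> mu ^+ 2 * gda_sqnorm v <= gda_sqnorm w.
Proof.
move=> mu0 H; have := @gda_dot_le_scaled mu^-1 w v.
rewrite invr_gt0 invrK => /(_ mu0) H2.
have -> : gda_sqnorm w = mu * (mu^-1 * gda_sqnorm w) by rewrite mulrA mulfV ?gt_eqF ?mul1r.
rewrite expr2 -mulrA; apply: ler_wpM2l; [exact: ltW | lra].
Qed.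

End InnerProduct.

Section IncrementalPass.
Context {R : realType} {d : nat}.
Variables (alpha : R) (h : nat -> 'rV[R]_d -> 'rV[R]_d).
Variable z : 'rV[R]_d.

Fixpoint incr_iter (i : nat) : 'rV[R]_d :=
  if i is i'.+1 then incr_iter i' - alpha *: h i' (incr_iter i') else z.

Lemma incr_iter_displacement i :
  incr_iter i - z = - (alpha *: \sum_(j < i) h j (incr_iter j)).
Proof.
elim: i => [|i IH]; first by rewrite big_ord0 scaler0 oppr0 subrr.
by rewrite big_ord_recr /= scalerDr opprD -IH addrAC.
Qed.

Lemma incr_iter_drift i m : (i <= m)%N ->
  gda_sqnorm (incr_iter i - z)
  <= alpha ^+ 2 * i%:R * \sum_(j < m) gda_sqnorm (h j (incr_iter j)).
Proof.
move=> im; rewrite incr_iter_displacement gda_sqnormN gda_sqnormZ -mulrA.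
rewrite ler_wpM2l ?sqr_ge0 //; apply: le_trans (gda_sqnorm_sum_le _ _) _.
rewrite ler_wpM2l // -!(big_mkord xpredT (fun j => gda_sqnorm (h j (incr_iter j)))).
rewrite (big_cat_nat _ im) //= lerDl sumr_ge0 // => j _; exact: gda_sqnorm_ge0.
Qed.

Lemma incr_drift_sum_le m :
  \sum_(i < m) gda_sqnorm (incr_iter i - z)
  <= (m%:R * alpha) ^+ 2 / 2 * \sum_(j < m) gda_sqnorm (h j (incr_iter j)).
Proof.
set G := \sum_(j < m) gda_sqnorm (h j _).
have G0 : 0 <= G by rewrite sumr_ge0 // => j _; exact: gda_sqnorm_ge0.
apply: (@le_trans _ _ (\sum_(i < m) alpha ^+ 2 * (i : nat)%:R * G)).
  by apply: ler_sum => i _; apply: incr_iter_drift; exact: ltnW.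
rewrite -mulr_suml -mulr_sumr exprMn.
have := sum_ord_natr_le R m; have := mulr_ge0 (sqr_ge0 alpha) G0; nra.
Qed.

Variables (L : R) (zs : 'rV[R]_d).
Hypothesis L_ge0 : 0 <= L.
Hypothesis h_lip : forall j x y, gda_sqnorm (h j x - h j y) <= L * gda_sqnorm (x - y).

Lemma incr_grad_sum_le m :
  \sum_(j < m) gda_sqnorm (h j (incr_iter j))
  <= 2 * \sum_(j < m) gda_sqnorm (h j zs) + 4 * L * m%:R * gda_sqnorm (z - zs)
     + 4 * L * \sum_(j < m) gda_sqnorm (incr_iter j - z).
Proof.
set W := gda_sqnorm (z - zs).
have step j : gda_sqnorm (h j (incr_iter j)) <=
    2 * gda_sqnorm (h j zs) + 4 * L * W + 4 * L * gda_sqnorm (incr_iter j - z).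
  have -> : h j (incr_iter j) = h j zs + (h j (incr_iter j) - h j zs) by rewrite addrC subrK.
  apply: le_trans (gda_sqnormD_le2 _ _) _.
  have := h_lip j (incr_iter j) zs.
  have -> : incr_iter j - zs = (incr_iter j - z) + (z - zs) by rewrite addrA subrK.
  have := ler_wpM2l L_ge0 (gda_sqnormD_le2 (incr_iter j - z) (z - zs)); rewrite -/W; lra.
apply: le_trans (ler_sum _ (fun (j : 'I_m) _ => step j)) _.
rewrite !big_split /= -!mulr_sumr sumr_const card_ord -mulr_natr; lra.
Qed.

Lemma incr_drift_sum_bound m :
  \sum_(i < m) gda_sqnorm (incr_iter i - z)
  <= (m%:R * alpha) ^+ 2 * (\sum_(j < m) gda_sqnorm (h j zs)
       + 2 * L * m%:R * gda_sqnorm (z - zs) + 2 * L * \sum_(i < m) gda_sqnorm (incr_iter i - z)).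
Proof.
apply: le_trans (incr_drift_sum_le m) _.
have := ler_wpM2l (divr_ge0 (sqr_ge0 (m%:R * alpha)) (ler0n R 2)) (incr_grad_sum_le m).
lra.
Qed.

Lemma incr_iter_split m :
  incr_iter m - zs = (z - alpha *: \sum_(j < m) h j z - zs)
     - alpha *: \sum_(j < m) (h j (incr_iter j) - h j z).
Proof.
have := incr_iter_displacement m => /eqP; rewrite subr_eq => /eqP ->.
rewrite sumrB scalerBr; move: (alpha *: _) (alpha *: _) => a b.
by rewrite opprB [- b + z]addrC addrAC [z - a - zs]addrAC -[RHS]addrA addKr.
Qed.

Lemma incr_error_le m b : (0 < m)%N -> b = (m%:R * alpha) ^+ 2 * L -> 2 * b <= 1 ->
  (1 - 2 * b) * gda_sqnorm (alpha *: \sum_(j < m) (h j (incr_iter j) - h j z))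
  <= b * ((m%:R * alpha) ^+ 2 * (m%:R^-1 * \sum_(j < m) gda_sqnorm (h j zs))
          + 2 * b * gda_sqnorm (z - zs)).
Proof.
move=> m0 bE hb; rewrite gda_sqnormZ.
set S := \sum_(i < m) gda_sqnorm (incr_iter i - z).
set Q := \sum_(j < m) gda_sqnorm (h j zs).
set W := gda_sqnorm (z - zs).
have mR0 : 0 < (m%:R : R) by rewrite ltr0n.
have HE : gda_sqnorm (\sum_(j < m) (h j (incr_iter j) - h j z)) <= m%:R * (L * S).
  apply: le_trans (gda_sqnorm_sum_le _ _) _; rewrite ler_wpM2l ?ler0n // /S mulr_sumr.
  by apply: ler_sum => j _; exact: h_lip.
have HS : (1 - 2 * b) * S <= (m%:R * alpha) ^+ 2 * (Q + 2 * L * m%:R * W).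
  by have := incr_drift_sum_bound m; rewrite -/S -/Q -/W bE; lra.
have c0 : 0 <= alpha ^+ 2 * m%:R * L by rewrite mulr_ge0 // mulr_ge0 ?sqr_ge0 ?ler0n.
have := ler_wpM2l c0 HS.
have := ler_wpM2l (sqr_ge0 alpha) HE.
have b1 : 0 <= 1 - 2 * b by lra.
move=> /(ler_wpM2l b1) H1 H2.
suff -> : b * ((m%:R * alpha) ^+ 2 * (m%:R^-1 * Q) + 2 * b * W)
       = alpha ^+ 2 * m%:R * L * ((m%:R * alpha) ^+ 2 * (Q + 2 * L * m%:R * W)).
  apply: le_trans H1 _; apply: le_trans H2; lra.
by rewrite bE; clearbody Q W; field; rewrite gt_eqF.
Qed.

End IncrementalPass.

Lemma incr_iter_ext {R : realType} {d : nat} (alpha : R) (h h' : nat -> 'rV[R]_d -> 'rV[R]_d) z i :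
  (forall j, (j < i)%N -> h j = h' j) -> incr_iter alpha h z i = incr_iter alpha h' z i.
Proof.
elim: i => [//|i IH] hh /=.
by rewrite IH ?hh // => j ji; apply: hh; exact: ltnW.
Qed.

Lemma foldl_incr_iter {R : realType} {d : nat} {T : Type} (alpha : R)
    (f : T -> 'rV[R]_d -> 'rV[R]_d) (x0 : T) (z : 'rV[R]_d) (s : seq T) :
  foldl (fun w i => w - alpha *: f i w) z s
  = incr_iter alpha (fun j => f (nth x0 s j)) z (size s).
Proof.
elim/last_ind: s => [//|s x IH].
rewrite foldl_rcons IH size_rcons /= nth_rcons ltnn eqxx.
by congr (_ - _ *: f x _); apply: incr_iter_ext => j js; rewrite nth_rcons js.
Qed.

Section GDA.
Context {R : realType} {d n : nat}.
Variables (omega : 'I_n -> 'rV[R]_d -> 'rV[R]_d) (l mu : R) (zs : 'rV[R]_d).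
Hypotheses (n_gt0 : (0 < n)%N) (mu_gt0 : 0 < mu).
Hypothesis omega_lip : forall i, gda_lipschitz l (omega i).
Hypothesis nu_mono : gda_strongly_monotone mu (gda_nu omega).
Hypothesis nu_root : gda_nu omega zs = 0.

Let nR_gt0 : 0 < (n%:R : R). Proof. by rewrite ltr0n. Qed.

Lemma gda_nu_lipschitz_sqnorm x y :
  gda_sqnorm (gda_nu omega x - gda_nu omega y) <= l ^+ 2 * gda_sqnorm (x - y).
Proof.
rewrite /gda_nu -scalerBr -sumrB gda_sqnormZ.
have Hsum : \sum_(i < n) gda_sqnorm (omega i x - omega i y) <= n%:R * (l ^+ 2 * gda_sqnorm (x - y)).
  have -> : n%:R * (l ^+ 2 * gda_sqnorm (x - y)) = \sum_(i < n) l ^+ 2 * gda_sqnorm (x - y)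
    by rewrite sumr_const card_ord mulr_natl.
  by apply: ler_sum => i _; exact: gda_lipschitz_sqnorm.
have -> : l ^+ 2 * gda_sqnorm (x - y)
    = n%:R^-1 ^+ 2 * (n%:R * (n%:R * (l ^+ 2 * gda_sqnorm (x - y)))).
  by field; rewrite gt_eqF.
apply: ler_wpM2l; first exact: sqr_ge0.
apply: le_trans (gda_sqnorm_sum_le _ _) _.
by apply: ler_wpM2l => //; exact: Hsum.
Qed.

Lemma gda_nu_sqnorm_ge z : mu ^+ 2 * gda_sqnorm (z - zs) <= gda_sqnorm (gda_nu omega z).
Proof. by apply: gda_sqnorm_le_dot => //; have := nu_mono z zs; rewrite nu_root subr0. Qed.

Lemma strongly_monotone_le_lipschitz : (0 < d)%N -> mu ^+ 2 <= l ^+ 2.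
Proof.
move=> d_gt0; pose v : 'rV[R]_d := const_mx 1.
have v0 : 0 < gda_sqnorm v.
  rewrite /gda_sqnorm /gda_dot (eq_bigr (fun _ => 1)) => [|j _]; last by rewrite mxE mulr1.
  by rewrite sumr_const card_ord ltr0n.
have := gda_nu_sqnorm_ge (v + zs); have := gda_nu_lipschitz_sqnorm (v + zs) zs.
rewrite nu_root subr0 addrK => H1 H2.
by rewrite -(ler_pM2r v0); exact: le_trans H2 H1.
Qed.

Lemma gda_nu_step_le p z : 0 <= p ->
  gda_sqnorm ((z - zs) - p *: gda_nu omega z)
  <= (1 - 2 * (p * mu) + p ^+ 2 * l ^+ 2) * gda_sqnorm (z - zs).
Proof.
move=> p0; rewrite -scaleNr gda_sqnormD gda_sqnormZ gda_dotZr sqrrN gda_dotC.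
have Hmono : mu * gda_sqnorm (z - zs) <= gda_dot (gda_nu omega z) (z - zs).
  by have := nu_mono z zs; rewrite nu_root subr0.
have Hlip : gda_sqnorm (gda_nu omega z) <= l ^+ 2 * gda_sqnorm (z - zs).
  by have := gda_nu_lipschitz_sqnorm z zs; rewrite nu_root subr0.
have := ler_wpM2l (sqr_ge0 p) Hlip; have := ler_wpM2l p0 Hmono; nra.
Qed.

Lemma gda_sigma2_ge0 z : 0 <= gda_sigma2 omega z.
Proof.
by rewrite /gda_sigma2 mulr_ge0 ?invr_ge0 ?ler0n // sumr_ge0 // => i _; exact: gda_sqnorm_ge0.
Qed.

Lemma gda_noise_ge0 alpha : 0 <= alpha ->
  0 <= l ^+ 2 * gda_sigma2 omega zs * alpha ^+ 3 * n%:R ^+ 3 / mu.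
Proof.
move=> alpha_ge0; apply: divr_ge0 (ltW mu_gt0); rewrite mulr_ge0 ?exprn_ge0 ?ler0n //.
by rewrite mulr_ge0 ?exprn_ge0 // mulr_ge0 ?sqr_ge0 ?gda_sigma2_ge0.
Qed.

Lemma gda_epoch_incr_iter alpha (tau : 'S_n) z :
  gda_epoch omega alpha tau z
  = incr_iter alpha (fun j => omega (tau (nth (Ordinal n_gt0) (enum 'I_n) j))) z n.
Proof. by rewrite /gda_epoch (foldl_incr_iter _ _ (Ordinal n_gt0)) size_enum_ord. Qed.

Lemma sum_perm_nth_enum {T : zmodType} (tau : 'S_n) (F : 'I_n -> T) :
  \sum_(j < n) F (tau (nth (Ordinal n_gt0) (enum 'I_n) j)) = \sum_(i < n) F i.
Proof.
rewrite (eq_bigr (fun j => F (tau j))) => [|j _]; last by rewrite nth_ord_enum.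
by rewrite [RHS](reindex_inj (@perm_inj _ tau)).
Qed.

Lemma gda_epoch_le alpha (tau : 'S_n) z :
  0 < alpha -> 5 * (n%:R * alpha) * l ^+ 2 <= mu -> mu ^+ 2 <= l ^+ 2 ->
  gda_sqnorm (gda_epoch omega alpha tau z - zs)
  <= (1 - n%:R * alpha * mu) * gda_sqnorm (z - zs)
     + 3 * (l ^+ 2 * gda_sigma2 omega zs * alpha ^+ 3 * n%:R ^+ 3 / mu).
Proof.
move=> alpha_gt0 alpha_le mu_le_l.
rewrite gda_epoch_incr_iter; set h := fun j => _.
set W := gda_sqnorm (z - zs).
set p := n%:R * alpha; set x := p * mu; set b := p ^+ 2 * l ^+ 2.
have p_gt0 : 0 < p by rewrite mulr_gt0.
have x_gt0 : 0 < x by rewrite mulr_gt0.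
have l2_gt0 : 0 < l ^+ 2 by apply: lt_le_trans mu_le_l; rewrite exprn_gt0.
have bx : 5 * b <= x.
  by have := ler_wpM2r (ltW p_gt0) alpha_le; rewrite /b /x -/p; nra.
have x15 : x <= 1 / 5 := step_size_contraction_le _ _ _ mu_gt0 (ltW p_gt0) mu_le_l alpha_le.
have hU : gda_sqnorm ((z - zs) - p *: gda_nu omega z) <= (1 - 2 * x + b) * W.
  exact: gda_nu_step_le (ltW p_gt0).
have h_lip j x1 x2 : gda_sqnorm (h j x1 - h j x2) <= l ^+ 2 * gda_sqnorm (x1 - x2).
  by apply: gda_lipschitz_sqnorm; exact: omega_lip.
have hQ : n%:R^-1 * \sum_(j < n) gda_sqnorm (h j zs) = gda_sigma2 omega zs.
  by rewrite (sum_perm_nth_enum tau (fun i => gda_sqnorm (omega i zs))).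
have hsum : \sum_(j < n) h j z = n%:R *: gda_nu omega z.
  by rewrite (sum_perm_nth_enum tau (fun i => omega i z)) /gda_nu scalerA mulfV ?gt_eqF ?scale1r.
have hb1 : 2 * b <= 1 by lra.
have := incr_error_le alpha h z (l ^+ 2) zs (ltW l2_gt0) h_lip n b n_gt0 (erefl _) hb1.
rewrite hQ -/W; set Y := gda_sqnorm _ => hY.
set N := l ^+ 2 * gda_sigma2 omega zs * alpha ^+ 3 * n%:R ^+ 3 / mu.
have hN : x * N = b * (p ^+ 2 * gda_sigma2 omega zs).
  by rewrite /N /x /b /p; field; rewrite gt_eqF.
have N_ge0 : 0 <= N := gda_noise_ge0 alpha (ltW alpha_gt0).
(* The epoch is a full step of size [p] on [nu] perturbed by the drift. *)
rewrite incr_iter_split hsum scalerA (mulrC alpha) -/p [z - _ - zs]addrAC.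
have b_ge0 : 0 <= b by rewrite mulr_ge0 ?sqr_ge0.
apply: (@epoch_contraction_arith _ x b W N _ _ Y x_gt0 x15 b_ge0 bx (gda_sqnorm_ge0 _) N_ge0 hU).
  by rewrite hN; move: hY; rewrite -/p; lra.
have x2_gt0 : 0 < x / 2 by rewrite divr_gt0.
by apply: le_trans (gda_sqnormD_le_scaled _ _ _ x2_gt0) _; rewrite gda_sqnormN.
Qed.

Variable z0 : 'rV[R]_d.

Lemma gda_le_expR alpha taus K : 0 < alpha -> alpha <= mu / (5 * n%:R * l ^+ 2) ->
  gda_sqnorm (gda omega alpha taus K z0 - zs)
  <= expR (- (n%:R * alpha * mu * K%:R)) * gda_sqnorm (z0 - zs)
     + K%:R * (3 * (l ^+ 2 * gda_sigma2 omega zs * alpha ^+ 3 * n%:R ^+ 3 / mu)).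
Proof.
move=> alpha_gt0 alpha_le.
set N := _ / mu.
have N_ge0 : 0 <= N := gda_noise_ge0 alpha (ltW alpha_gt0).
have W_ge0 := gda_sqnorm_ge0 (z0 - zs).
have [d0|d_gt0] := posnP d.
  by rewrite !gda_sqnorm_dim0 // mulr0 add0r mulr_ge0 // mulr_ge0.
have mu_le_l := strongly_monotone_le_lipschitz d_gt0.
have l2_gt0 : 0 < l ^+ 2 by apply: lt_le_trans mu_le_l; rewrite exprn_gt0.
have step_le : 5 * (n%:R * alpha) * l ^+ 2 <= mu.
  have -> : 5 * (n%:R * alpha) * l ^+ 2 = alpha * (5 * n%:R * l ^+ 2) by ring.
  by rewrite -ler_pdivlMr // mulr_gt0 // mulr_gt0 ?ltr0n.
have x_le : n%:R * alpha * mu <= 1 / 5.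
  exact: step_size_contraction_le _ _ _ mu_gt0 (mulr_ge0 (ler0n R n) (ltW alpha_gt0)) mu_le_l step_le.
have x_ge0 : 0 <= n%:R * alpha * mu by rewrite !mulr_ge0 ?ler0n ?ltW.
have c01 : 0 <= 1 - n%:R * alpha * mu <= 1 by apply/andP; split; lra.
pose a k := gda_sqnorm (gda omega alpha taus k z0 - zs).
have step k : a k.+1 <= (1 - n%:R * alpha * mu) * a k + 3 * N.
  exact: gda_epoch_le alpha_gt0 step_le mu_le_l.
apply: le_trans (affine_recurrence_le a _ _ c01 (mulr_ge0 (ler0n R 3) N_ge0) step K) _.
rewrite lerD2r ler_wpM2r //; apply: expn_one_sub_le_expR; lra.
Qed.

Lemma gda_convergence (alpha : R) (K : nat) :
  0 < alpha -> alpha <= mu / (5 * n%:R * l ^+ 2) -> (1 <= K)%N ->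
  forall taus : nat -> 'S_n,
    gda_sqnorm (gda omega alpha taus K z0 - zs)
    <= 2 * expR (- (n%:R * alpha * mu * K%:R)) * gda_sqnorm (z0 - zs)
       + 3 * l ^+ 2 * gda_sigma2 omega zs * alpha ^+ 3 * n%:R ^+ 3 * K%:R / mu.
Proof.
move=> alpha_gt0 alpha_le _ taus; apply: le_trans (gda_le_expR _ taus K alpha_gt0 alpha_le) _.
have := mulr_ge0 (expR_ge0 (- (n%:R * alpha * mu * K%:R))) (gda_sqnorm_ge0 (z0 - zs)).
have -> : K%:R * (3 * (l ^+ 2 * gda_sigma2 omega zs * alpha ^+ 3 * n%:R ^+ 3 / mu))
    = 3 * l ^+ 2 * gda_sigma2 omega zs * alpha ^+ 3 * n%:R ^+ 3 * K%:R / mu by ring.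
lra.
Qed.

Lemma gda_tuned_noise_le (alpha Lg : R) (K : nat) : (0 < K)%N -> 0 <= alpha ->
  alpha <= 2 * Lg / (mu * n%:R * K%:R) ->
  K%:R * (3 * (l ^+ 2 * gda_sigma2 omega zs * alpha ^+ 3 * n%:R ^+ 3 / mu))
  <= 24 * (l / mu) ^+ 2 * gda_sigma2 omega zs * Lg ^+ 3 / (mu ^+ 2 * K%:R ^+ 2).
Proof.
move=> K_gt0 alpha_ge0 alpha_le.
have KR_gt0 : 0 < (K%:R : R) by rewrite ltr0n.
pose c := K%:R * (3 * (l ^+ 2 * gda_sigma2 omega zs * n%:R ^+ 3 / mu)).
have c_ge0 : 0 <= c.
  apply: mulr_ge0 (ler0n _ _) (mulr_ge0 (ler0n _ 3) (divr_ge0 _ (ltW mu_gt0))).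
  exact: mulr_ge0 (mulr_ge0 (sqr_ge0 l) (gda_sigma2_ge0 zs)) (exprn_ge0 _ (ler0n _ n)).
have alpha_nneg : alpha \is Num.nneg by rewrite nnegrE.
have bound_nneg : 2 * Lg / (mu * n%:R * K%:R) \is Num.nneg.
  by rewrite nnegrE; exact: le_trans alpha_le.
have -> : K%:R * (3 * (l ^+ 2 * gda_sigma2 omega zs * alpha ^+ 3 * n%:R ^+ 3 / mu))
          = c * alpha ^+ 3 by rewrite /c; ring.
apply: le_trans (ler_wpM2l c_ge0 (lerXn2r 3 alpha_nneg bound_nneg alpha_le)) _.
have -> : c * (2 * Lg / (mu * n%:R * K%:R)) ^+ 3
          = 24 * (l / mu) ^+ 2 * gda_sigma2 omega zs * Lg ^+ 3 / (mu ^+ 2 * K%:R ^+ 2).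
  by rewrite /c; field; rewrite !gt_eqF.
by [].
Qed.

Lemma gda_tuned_bias_le (alpha : R) (K : nat) : (0 < K)%N -> 0 < l ^+ 2 ->
  let X := gda_norm (gda_nu omega z0) * K%:R / mu in
  1 < X -> alpha = Num.min (mu / (5 * n%:R * l ^+ 2)) (2 * ln X / (mu * n%:R * K%:R)) ->
  expR (- (n%:R * alpha * mu * K%:R)) * gda_sqnorm (z0 - zs)
  <= expR (- (K%:R / (5 * (l / mu) ^+ 2))) * gda_sqnorm (z0 - zs)
     + (K%:R ^+ 2)^-1.
Proof.
move=> K_gt0 l2_gt0 X X_gt1 ->.
have KR_gt0 : 0 < (K%:R : R) by rewrite ltr0n.
have W_ge0 := gda_sqnorm_ge0 (z0 - zs).
have K2_ge0 : 0 <= (K%:R ^+ 2 : R)^-1 by rewrite invr_ge0 exprn_ge0 ?ler0n.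
have exp_ge0 := mulr_ge0 (expR_ge0 (- (K%:R / (5 * (l / mu) ^+ 2)))) W_ge0.
set a1 := mu / _; set a2 := 2 * ln X / _.
(* Either [alpha] is the constant step size, or [exp (- n alpha mu K) = X^-2]. *)
case: (leP a1 a2) => _.
  have -> : n%:R * a1 * mu * K%:R = K%:R / (5 * (l / mu) ^+ 2).
    by rewrite /a1; field; rewrite (gt_eqF mu_gt0) (gt_eqF nR_gt0) -sqrf_eq0 (gt_eqF l2_gt0).
  lra.
have X_gt0 : 0 < X by lra.
have -> : n%:R * a2 * mu * K%:R = ln X * 2%:R.
  by rewrite /a2; field; rewrite (gt_eqF mu_gt0) (gt_eqF nR_gt0) (gt_eqF KR_gt0).
rewrite expRN expRM_natr lnK ?posrE //.
suff : (X ^+ 2)^-1 * gda_sqnorm (z0 - zs) <= (K%:R ^+ 2)^-1 by lra.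
have X2 : X ^+ 2 = gda_sqnorm (gda_nu omega z0) / mu ^+ 2 * K%:R ^+ 2.
  rewrite /X /gda_norm !exprMn sqr_sqrtr ?gda_sqnorm_ge0 // exprVn.
  by rewrite mulrAC.
rewrite ler_pdivrMl ?exprn_gt0 // X2 mulfK ?gt_eqF ?exprn_gt0 //.
by rewrite ler_pdivlMr ?exprn_gt0 // mulrC; exact: gda_nu_sqnorm_ge.
Qed.

Lemma gda_convergence_tuned (K : nat) : (1 <= K)%N ->
  1 < gda_norm (gda_nu omega z0) * K%:R / mu ->
  let alpha := Num.min (mu / (5 * n%:R * l ^+ 2))
                       (2 * ln (gda_norm (gda_nu omega z0) * K%:R / mu) / (mu * n%:R * K%:R)) in
  let kappa := l / mu in
  forall taus : nat -> 'S_n,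
    gda_sqnorm (gda omega alpha taus K z0 - zs)
    <= 2 * expR (- (K%:R / (5 * kappa ^+ 2))) * gda_sqnorm (z0 - zs)
       + (2 * mu ^+ 2 + 24 * kappa ^+ 2 * gda_sigma2 omega zs
            * (ln (gda_norm (gda_nu omega z0) * K%:R / mu)) ^+ 3) / (mu ^+ 2 * K%:R ^+ 2).
Proof.
move=> K_gt0 X_gt1 alpha kappa taus; rewrite /kappa.
set X := gda_norm _ * _ / _ in X_gt1 alpha *.
have [d0|d_gt0] := posnP d.
  by move: X_gt1; rewrite /X /gda_norm gda_sqnorm_dim0 // sqrtr0 !mul0r ltr10.
have l2_gt0 : 0 < l ^+ 2.
  by apply: lt_le_trans (strongly_monotone_le_lipschitz d_gt0); rewrite exprn_gt0.
have KR_gt0 : 0 < (K%:R : R) by rewrite ltr0n.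
have lnX_gt0 : 0 < ln X := ln_gt0 X_gt1.
have alpha_gt0 : 0 < alpha.
  have c_gt0 : 0 < 5 * n%:R * l ^+ 2 by rewrite mulr_gt0 // mulr_gt0 ?ltr0n.
  by rewrite lt_min !divr_gt0 // ?mulr_gt0.
have alpha_le1 : alpha <= mu / (5 * n%:R * l ^+ 2) by rewrite ge_min lexx.
have alpha_le2 : alpha <= 2 * ln X / (mu * n%:R * K%:R) by rewrite ge_min lexx orbT.
apply: le_trans (gda_le_expR _ taus K alpha_gt0 alpha_le1) _.
have := gda_tuned_bias_le alpha K K_gt0 l2_gt0 X_gt1 (erefl alpha).
have := gda_tuned_noise_le alpha (ln X) K K_gt0 (ltW alpha_gt0) alpha_le2.
have -> : (2 * mu ^+ 2 + 24 * (l / mu) ^+ 2 * gda_sigma2 omega zs * ln X ^+ 3)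
            / (mu ^+ 2 * K%:R ^+ 2)
          = 2 * (K%:R ^+ 2)^-1
            + 24 * (l / mu) ^+ 2 * gda_sigma2 omega zs * ln X ^+ 3 / (mu ^+ 2 * K%:R ^+ 2).
  by field; rewrite (gt_eqF mu_gt0) (gt_eqF KR_gt0).
have := mulr_ge0 (expR_ge0 (- (K%:R / (5 * (l / mu) ^+ 2)))) (gda_sqnorm_ge0 (z0 - zs)).
have : 0 <= (K%:R ^+ 2 : R)^-1 by rewrite invr_ge0 exprn_ge0 ?ler0n.
lra.
Qed.

End GDA.

Theorem theorem2 (R : realType) (d n : nat) (omega : 'I_n -> 'rV[R]_d -> 'rV[R]_d)
  (l mu : R) (zstar z0 : 'rV[R]_d) :
  (0 < n)%N ->
  0 < mu ->
  (forall i, gda_lipschitz l (omega i)) ->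
  gda_strongly_monotone mu (gda_nu omega) ->
  gda_nu omega zstar = 0 ->
  (forall (alpha : R) (K : nat), 0 < alpha -> alpha <= mu / (5 * n%:R * l ^+ 2) ->
     (1 <= K)%N ->
     forall taus : nat -> 'S_n,
       gda_sqnorm (gda omega alpha taus K z0 - zstar)
       <= 2 * expR (- (n%:R * alpha * mu * K%:R)) * gda_sqnorm (z0 - zstar)
          + 3 * l ^+ 2 * gda_sigma2 omega zstar * alpha ^+ 3 * n%:R ^+ 3 * K%:R / mu)
  /\
  (forall K : nat, (1 <= K)%N ->
     1 < gda_norm (gda_nu omega z0) * K%:R / mu ->
     let alpha := Num.min (mu / (5 * n%:R * l ^+ 2))
                          (2 * ln (gda_norm (gda_nu omega z0) * K%:R / mu) / (mu * n%:R * K%:R)) in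
     let kappa := l / mu in
     forall taus : nat -> 'S_n,
       gda_sqnorm (gda omega alpha taus K z0 - zstar)
       <= 2 * expR (- (K%:R / (5 * kappa ^+ 2))) * gda_sqnorm (z0 - zstar)
          + (2 * mu ^+ 2 + 24 * kappa ^+ 2 * gda_sigma2 omega zstar
               * (ln (gda_norm (gda_nu omega z0) * K%:R / mu)) ^+ 3) / (mu ^+ 2 * K%:R ^+ 2)).
Proof.
move=> n_gt0 mu_gt0 omega_lip nu_mono nu_root; split.
- exact: gda_convergence.
- exact: gda_convergence_tuned.
Qed.
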